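(* Let $T$ be as in the context. (i) The set of trigonometric polynomials on $\mathbb T^d$ which are smoothly cohomologous to a constant with respect to $T$ is dense in $\mathscr P(d)$ with respect to $\|\cdot\|_\infty$. (ii) The set of elements of $\mathscr Q(d)$ which are smooth coboundaries for $T$ is dense in $\mathscr Q(d)$ with respect to $\|\cdot\|_\infty$.
   Context: Let $d\ge2$, $\mathbb T^d=\mathbb R^d/\mathbb Z^d$ with points as row vectors $\mathbf x=(x_1,\dots,x_d)$. $A$ is a $d\times d$ upper triangular unipotent integer matrix, $A\ne\mathrm{Id}$, $\mathbf b\in\mathbb T^d$, $T\mathbf x=\mathbf xA+\mathbf b$, assumed uniquely ergodic. $\mathscr P(d)$ is the space of trigonometric polynomials on $\mathbb T^d$ and $\mathscr Q(d)=\{\Phi\in\mathscr P(d):\int_0^1\Phi\,dx_d\equiv 0\}$. $\Psi$ is smoothly cohomologous to a constant if $\Psi-\int\Psi\,d\lambda_d=u\circ T-u$ for some $C^\infty$ function $u$; $\Phi$ is a smooth coboundary if $\Phi=u\circ T-u$ with $u$ $C^\infty$. *)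

From Stdlib Require Import Reals Lra Lia ZArith List.
Open Scope R_scope.

(* Points of R^d are represented as functions nat -> R; only the
   coordinates 0..d-1 are relevant (coordinate j is x_{j+1} of the paper). *)
Definition pt := nat -> R.

(* Complex numbers as pairs (real part, imaginary part). *)
Definition Cx := (R * R)%type.
Definition cadd (z w : Cx) : Cx := (fst z + fst w, snd z + snd w).
Definition csub (z w : Cx) : Cx := (fst z - fst w, snd z - snd w).
Definition cmod (z : Cx) : R := sqrt (fst z * fst z + snd z * snd z).

Definition upd (x : pt) (i : nat) (t : R) : pt :=
  fun j => if Nat.eqb j i then t else x j.

Fixpoint rsum (n : nat) (g : nat -> R) : R :=
  match n with O => 0 | S m => rsum m g + g m end.

(* The affine map T x = x A + b (row vector convention); coordinates >= d
   are left untouched. *)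
Definition Tmap (d : nat) (A : nat -> nat -> Z) (b : pt) (x : pt) : pt :=
  fun j => if Nat.ltb j d then rsum d (fun i => x i * IZR (A i j)) + b j
           else x j.

(* Functions on T^d: depend only on the first d coordinates and are
   Z^d-periodic. *)
Definition TorusFun {V : Type} (d : nat) (f : pt -> V) : Prop :=
  (forall x y : pt, (forall j, (j < d)%nat -> x j = y j) -> f x = f y) /\
  (forall (x : pt) (j : nat), (j < d)%nat -> f (upd x j (x j + 1)) = f x).

Definition contd (d : nat) (f : pt -> R) : Prop :=
  forall (x : pt) (eps : R), 0 < eps -> exists delta, 0 < delta /\
    forall y : pt, (forall j, (j < d)%nat -> Rabs (y j - x j) < delta) ->
                   (forall j, (d <= j)%nat -> y j = x j) ->
                   Rabs (f y - f x) < eps.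

Fixpoint Ck (d n : nat) (f : pt -> R) : Prop :=
  match n with
  | O => contd d f
  | S m => contd d f /\
      forall i, (i < d)%nat -> exists g : pt -> R,
        (forall x : pt, derivable_pt_lim (fun t => f (upd x i (x i + t))) 0 (g x))
        /\ Ck d m g
  end.

Definition Smooth (d : nat) (f : pt -> R) : Prop := forall n, Ck d n f.

Definition SmoothTorusC (d : nat) (u : pt -> Cx) : Prop :=
  TorusFun d u /\ Smooth d (fun x => fst (u x)) /\ Smooth d (fun x => snd (u x)).

(* Trigonometric polynomials: finite sums of c_k e^{2 pi i <k, x>}, k in Z^d. *)
Definition trig_term (d : nat) (kc : (nat -> Z) * Cx) (x : pt) : Cx :=
  let th := 2 * PI * rsum d (fun j => IZR (fst kc j) * x j) in
  let a := fst (snd kc) in let b := snd (snd kc) in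
  (a * cos th - b * sin th, a * sin th + b * cos th).

Definition TrigPoly (d : nat) (f : pt -> Cx) : Prop :=
  exists l : list ((nat -> Z) * Cx), forall x : pt,
    f x = fold_right cadd (0, 0) (map (fun kc => trig_term d kc x) l).

(* Iterated Riemann integral over [0,1]^m in the coordinates 0..m-1
   (other coordinates taken from x): IntUpTo m f x c means the integral is c. *)
Fixpoint IntUpTo (m : nat) (f : pt -> R) (x : pt) (c : R) : Prop :=
  match m with
  | O => c = f x
  | S m' => exists h : R -> R,
      (forall t, IntUpTo m' f (upd x m' t) (h t)) /\
      exists pr : Riemann_integrable h 0 1, RiemannInt pr = c
  end.

Definition LebIntR (d : nat) (f : pt -> R) (c : R) : Prop :=
  forall x : pt, IntUpTo d f x c.
Definition LebIntC (d : nat) (f : pt -> Cx) (c : Cx) : Prop :=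
  LebIntR d (fun x => fst (f x)) (fst c) /\ LebIntR d (fun x => snd (f x)) (snd c).

(* Q(d): trigonometric polynomials with int_0^1 Phi dx_d = 0 identically
   (x_d is coordinate d-1). *)
Definition QPoly (d : nat) (f : pt -> Cx) : Prop :=
  TrigPoly d f /\ forall x : pt,
    (exists pr : Riemann_integrable (fun t => fst (f (upd x (d - 1) t))) 0 1,
        RiemannInt pr = 0) /\
    (exists pr : Riemann_integrable (fun t => snd (f (upd x (d - 1) t))) 0 1,
        RiemannInt pr = 0).

Definition SmoothCoboundary (d : nat) (A : nat -> nat -> Z) (b : pt)
  (f : pt -> Cx) : Prop :=
  exists u : pt -> Cx, SmoothTorusC d u /\
    forall x : pt, f x = csub (u (Tmap d A b x)) (u x).

Definition SmoothCohConst (d : nat) (A : nat -> nat -> Z) (b : pt)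
  (f : pt -> Cx) : Prop :=
  exists c : Cx, LebIntC d f c /\
  exists u : pt -> Cx, SmoothTorusC d u /\
    forall x : pt, csub (f x) c = csub (u (Tmap d A b x)) (u x).

(* Unique ergodicity, via the Riesz representation theorem: T-invariant
   Borel probability measures on T^d correspond exactly to positive,
   normalised, T-invariant linear functionals on Cx(T^d) (real valued). *)
Definition ContTorus (d : nat) (f : pt -> R) : Prop := TorusFun d f /\ contd d f.

Definition InvariantState (d : nat) (A : nat -> nat -> Z) (b : pt)
  (L : (pt -> R) -> R) : Prop :=
  (forall f g (a : R), ContTorus d f -> ContTorus d g ->
     L (fun x => a * f x + g x) = a * L f + L g) /\
  (forall f, ContTorus d f -> (forall x, 0 <= f x) -> 0 <= L f) /\
  L (fun _ => 1) = 1 /\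
  (forall f, ContTorus d f -> L (fun x => f (Tmap d A b x)) = L f).

Definition UniquelyErgodic (d : nat) (A : nat -> nat -> Z) (b : pt) : Prop :=
  (exists L, InvariantState d A b L) /\
  forall L1 L2, InvariantState d A b L1 -> InvariantState d A b L2 ->
    forall f, ContTorus d f -> L1 f = L2 f.

Definition UpperUnipotent (d : nat) (A : nat -> nat -> Z) : Prop :=
  (forall i, (i < d)%nat -> A i i = 1%Z) /\
  (forall i j, (j < i < d)%nat -> A i j = 0%Z).

Definition NotIdentity (d : nat) (A : nat -> nat -> Z) : Prop :=
  exists i j, (i < d)%nat /\ (j < d)%nat /\ i <> j /\ A i j <> 0%Z.

(* Split a trigonometric polynomial as [C + G], where [C] collects the constant terms and all
   frequencies of [G] are nonzero. Since [A] is unipotent upper triangular, [T] commutes with the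
   translation by [w] up to a translation supported on later coordinates; by descending induction
   on the support of [w], the unique invariant state is translation invariant and hence kills [G].
   A Krylov-Bogolyubov argument (ultralimits of empirical measures) then shows that the Birkhoff
   averages [A_N G = 1/N sum_(n<N) G o T^n] tend to [0] uniformly. As [G - A_N G = u o T - u] for
   the trigonometric polynomial [u = -1/N sum_(n<N) sum_(m<n) G o T^m], the polynomial
   [C + G - A_N G] is smoothly cohomologous to the constant [C] and uniformly close to [C + G].
   For (ii), the defining condition of Q(d) removes all frequencies with vanishing last coordinate;
   [k |-> A k] preserves the last coordinate, so the same construction stays inside Q(d). *)

From Stdlib Require Import Reals ZArith List Lra Lia FunctionalExtensionality Classical
  ClassicalEpsilon.
From Coquelicot Require Import Coquelicot.
From mathcomp Require filter.
Open Scope R_scope.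

Lemma rsum_ext n f g : (forall i, (i < n)%nat -> f i = g i) -> rsum n f = rsum n g.
Proof.
  induction n as [|n IH]; intros H; simpl; [reflexivity|].
  rewrite IH by (intros; apply H; lia). rewrite H by lia. reflexivity.
Qed.

Lemma rsum_plus n f g : rsum n (fun i => f i + g i) = rsum n f + rsum n g.
Proof. induction n as [|n IH]; simpl; [lra|]. rewrite IH; lra. Qed.

Lemma rsum_minus n f g : rsum n (fun i => f i - g i) = rsum n f - rsum n g.
Proof. induction n as [|n IH]; simpl; [lra|]. rewrite IH; lra. Qed.

Lemma rsum_scal n c f : rsum n (fun i => c * f i) = c * rsum n f.
Proof. induction n as [|n IH]; simpl; [lra|]. rewrite IH; lra. Qed.

Lemma rsum_const n c : rsum n (fun _ => c) = INR n * c.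
Proof. induction n as [|n IH]; simpl rsum; [simpl; lra|]. rewrite IH, S_INR. lra. Qed.

Lemma rsum_eq0 n f : (forall i, (i < n)%nat -> f i = 0) -> rsum n f = 0.
Proof. intros H. rewrite (rsum_ext n f (fun _ => 0)) by auto. rewrite rsum_const. lra. Qed.

Lemma rsum_single n f j : (j < n)%nat ->
  (forall i, (i < n)%nat -> i <> j -> f i = 0) -> rsum n f = f j.
Proof.
  induction n as [|n IH]; simpl; intros Hj H; [lia|].
  destruct (Nat.eq_dec j n) as [->|Hne].
  - rewrite rsum_eq0 by (intros; apply H; lia). lra.
  - rewrite IH, (H n) by (try lia; intros; apply H; lia). lra.
Qed.

Lemma rsum_swap n m (f : nat -> nat -> R) :
  rsum n (fun i => rsum m (fun j => f i j)) = rsum m (fun j => rsum n (fun i => f i j)).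
Proof.
  induction n as [|n IH]; simpl.
  - rewrite rsum_eq0; auto.
  - rewrite IH, <- rsum_plus. reflexivity.
Qed.

Lemma rsum_telescope n g : rsum n (fun m => g (S m) - g m) = g n - g O.
Proof. induction n as [|n IH]; simpl; [lra|]. rewrite IH; lra. Qed.

Lemma rsum_le n f g : (forall i, (i < n)%nat -> f i <= g i) -> rsum n f <= rsum n g.
Proof.
  induction n as [|n IH]; simpl; intros H; [lra|].
  pose proof (IH (fun i Hi => H i ltac:(lia))). pose proof (H n ltac:(lia)). lra.
Qed.

Lemma rsum_nonneg n f : (forall i, (i < n)%nat -> 0 <= f i) -> 0 <= rsum n f.
Proof.
  intros H. apply Rle_trans with (rsum n (fun _ => 0)); [rewrite rsum_const; lra|].
  apply rsum_le. auto.
Qed.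

Lemma rsum_abs n f : Rabs (rsum n f) <= rsum n (fun i => Rabs (f i)).
Proof.
  induction n as [|n IH]; simpl; [rewrite Rabs_R0; lra|].
  eapply Rle_trans; [apply Rabs_triang|]. lra.
Qed.

Lemma rsum_upd n (K : nat -> R) x j t : (j < n)%nat ->
  rsum n (fun i => K i * upd x j t i) = rsum n (fun i => K i * x i) + K j * (t - x j).
Proof.
  intros Hj.
  rewrite (rsum_ext n _ (fun i => K i * x i + (if Nat.eqb i j then K j * (t - x j) else 0))).
  - rewrite rsum_plus, (rsum_single n (fun i => if Nat.eqb i j then K j * (t - x j) else 0) j Hj).
    + rewrite Nat.eqb_refl. reflexivity.
    + intros i _ Hij. apply Nat.eqb_neq in Hij. rewrite Hij. reflexivity.
  - intros i _. unfold upd. destruct (Nat.eqb_spec i j); subst; lra.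
Qed.

Fixpoint Zsum (n : nat) (g : nat -> Z) : Z :=
  match n with O => 0%Z | S m => (Zsum m g + g m)%Z end.

Lemma IZR_Zsum n g : IZR (Zsum n g) = rsum n (fun j => IZR (g j)).
Proof. induction n as [|n IH]; simpl; [reflexivity|]. rewrite plus_IZR, IH. reflexivity. Qed.

Lemma Zsum_single n f j : (j < n)%nat ->
  (forall i, (i < n)%nat -> i <> j -> f i = 0%Z) -> Zsum n f = f j.
Proof.
  intros Hj H. apply eq_IZR. rewrite IZR_Zsum. apply (rsum_single n (fun i => IZR (f i)) j Hj).
  intros i Hi Hij. rewrite H by auto. reflexivity.
Qed.

Lemma filter_Forall_true {X} (q : X -> bool) l :
  List.Forall (fun a => q a = true) l -> filter q l = l.
Proof. induction 1 as [|a l Ha _ IH]; simpl; [reflexivity|]. rewrite Ha, IH. reflexivity. Qed.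

Lemma filter_Forall_false {X} (q : X -> bool) l :
  List.Forall (fun a => q a = false) l -> filter q l = nil.
Proof. induction 1 as [|a l Ha _ IH]; simpl; [reflexivity|]. rewrite Ha, IH. reflexivity. Qed.

Lemma Forall_filter {X} (P : X -> Prop) (q : X -> bool) l :
  (forall a, q a = true -> P a) -> List.Forall P (filter q l).
Proof. intros H. apply List.Forall_forall. intros a Ha. apply filter_In in Ha. apply H, Ha. Qed.

Definition cscale (r : R) (c : Cx) : Cx := (r * fst c, r * snd c).

Definition crot (c : Cx) (th : R) : Cx :=
  (fst c * cos th - snd c * sin th, fst c * sin th + snd c * cos th).

Lemma crot_plus c th ph : crot c (th + ph) = crot (crot c ph) th.
Proof. unfold crot; simpl. rewrite cos_plus, sin_plus. f_equal; ring. Qed.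

Lemma crot_scale r c th : crot (cscale r c) th = cscale r (crot c th).
Proof. unfold crot, cscale; simpl; f_equal; ring. Qed.

Lemma crot_0 c : crot c 0 = c.
Proof. unfold crot. rewrite cos_0, sin_0. destruct c; simpl; f_equal; ring. Qed.

Lemma crot_PI c : crot c PI = cscale (-1) c.
Proof. unfold crot, cscale. rewrite cos_PI, sin_PI. simpl; f_equal; ring. Qed.

Lemma cos_sin_2PI_IZR z : cos (2 * PI * IZR z) = 1 /\ sin (2 * PI * IZR z) = 0.
Proof.
  assert (Hnat: forall n, cos (2 * PI * INR n) = 1 /\ sin (2 * PI * INR n) = 0).
  { intros n. pose proof (cos_period 0 n). pose proof (sin_period 0 n).
    rewrite Rplus_0_l, cos_0 in *. rewrite sin_0 in *.
    replace (2 * PI * INR n) with (2 * INR n * PI) by ring. auto. }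
  destruct (Z_le_gt_dec 0 z).
  - rewrite <- (Z2Nat.id z), <- INR_IZR_INZ by lia. apply Hnat.
  - replace z with (- Z.of_nat (Z.to_nat (- z)))%Z by lia.
    rewrite opp_IZR, <- INR_IZR_INZ, Ropp_mult_distr_r_reverse, cos_neg, sin_neg.
    destruct (Hnat (Z.to_nat (- z))) as [-> ->]. split; ring.
Qed.

Lemma crot_2PI_IZR c z : crot c (2 * PI * IZR z) = c.
Proof. unfold crot. destruct (cos_sin_2PI_IZR z) as [-> ->]. destruct c; simpl; f_equal; ring. Qed.

Lemma cmod_le_abs z : cmod z <= Rabs (fst z) + Rabs (snd z).
Proof.
  unfold cmod. pose proof (Rabs_pos (fst z)). pose proof (Rabs_pos (snd z)).
  rewrite <- (sqrt_square (Rabs (fst z) + Rabs (snd z))) by lra.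
  apply sqrt_le_1_alt.
  pose proof (Rsqr_abs (fst z)). pose proof (Rsqr_abs (snd z)). unfold Rsqr in *. nra.
Qed.

(** * Trigonometric polynomials *)

Definition vadd (x w : pt) : pt := fun j => x j + w j.

Definition phase (d : nat) (k : nat -> Z) (x : pt) : R :=
  2 * PI * rsum d (fun j => IZR (k j) * x j).

Lemma trig_term_crot d kc x : trig_term d kc x = crot (snd kc) (phase d (fst kc) x).
Proof. reflexivity. Qed.

Lemma phase_ext d k x y : (forall j, (j < d)%nat -> x j = y j) -> phase d k x = phase d k y.
Proof. intros H. unfold phase. f_equal. apply rsum_ext. intros j Hj. rewrite H; auto. Qed.

Lemma phase_upd d k x j t : (j < d)%nat ->
  phase d k (upd x j t) = phase d k x + 2 * PI * IZR (k j) * (t - x j).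
Proof. intros Hj. unfold phase. rewrite rsum_upd by auto. ring. Qed.

Lemma phase_vadd d k x w : phase d k (vadd x w) = phase d k x + phase d k w.
Proof.
  unfold phase, vadd. rewrite <- Rmult_plus_distr_l, <- rsum_plus. f_equal.
  apply rsum_ext. intros; ring.
Qed.

Lemma trig_term_shift d k k' c x y ph : phase d k y = phase d k' x + ph ->
  trig_term d (k, c) y = trig_term d (k', crot c ph) x.
Proof. intros H. rewrite !trig_term_crot. simpl. rewrite H, crot_plus. reflexivity. Qed.

Lemma trig_term_const d k c x : (forall j, (j < d)%nat -> k j = 0%Z) -> trig_term d (k, c) x = c.
Proof.
  intros H. rewrite trig_term_crot. unfold phase. rewrite rsum_eq0.
  - simpl. rewrite Rmult_0_r. apply crot_0.
  - intros i Hi. rewrite H by auto. simpl; ring.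
Qed.

Notation term := ((nat -> Z) * Cx)%type.

Definition tpoly (d : nat) (l : list term) (x : pt) : Cx :=
  fold_right cadd (0, 0) (map (fun kc => trig_term d kc x) l).

Definition tpoly_re (d : nat) (l : list term) (x : pt) : R := fst (tpoly d l x).

Lemma TrigPoly_tpoly d l : TrigPoly d (tpoly d l).
Proof. exists l. reflexivity. Qed.

Lemma TrigPoly_tpolyP d f : TrigPoly d f -> exists l, f = tpoly d l.
Proof. intros [l Hl]. exists l. apply functional_extensionality. apply Hl. Qed.

Lemma tpoly_nil d x : tpoly d nil x = (0, 0).
Proof. reflexivity. Qed.

Lemma tpoly_cons d kc l x : tpoly d (kc :: l) x = cadd (trig_term d kc x) (tpoly d l x).
Proof. reflexivity. Qed.

Lemma tpoly_re_cons d kc l x : tpoly_re d (kc :: l) x = fst (trig_term d kc x) + tpoly_re d l x.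
Proof. reflexivity. Qed.

Lemma tpoly_app d l1 l2 x : tpoly d (l1 ++ l2) x = cadd (tpoly d l1 x) (tpoly d l2 x).
Proof.
  induction l1 as [|kc l1 IH]; simpl app; rewrite ?tpoly_nil, ?tpoly_cons.
  - destruct (tpoly d l2 x); unfold cadd; simpl; f_equal; ring.
  - rewrite IH. unfold cadd; simpl; f_equal; ring.
Qed.

Lemma tpoly_filter d p l x :
  tpoly d l x = cadd (tpoly d (filter p l) x) (tpoly d (filter (fun kc => negb (p kc)) l) x).
Proof.
  induction l as [|kc l IH]; simpl filter.
  - rewrite tpoly_nil. unfold cadd; simpl; f_equal; ring.
  - destruct (p kc); simpl negb; rewrite !tpoly_cons, IH;
      unfold cadd; apply injective_projections; simpl; ring.
Qed.

Definition term_scale (r : R) (kc : term) : term := (fst kc, cscale r (snd kc)).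

Lemma tpoly_scale d r l x : tpoly d (map (term_scale r) l) x = cscale r (tpoly d l x).
Proof.
  induction l as [|kc l IH]; simpl map; rewrite ?tpoly_nil, ?tpoly_cons.
  - unfold cscale; simpl; f_equal; ring.
  - rewrite IH, !trig_term_crot. simpl. rewrite crot_scale.
    unfold cscale, cadd; simpl; f_equal; ring.
Qed.

(* Multiplies the coefficient by [-i], since [Im z = Re (-i z)]. *)
Definition term_negi (kc : term) : term := (fst kc, (snd (snd kc), - fst (snd kc))).

Lemma tpoly_im d l x : snd (tpoly d l x) = tpoly_re d (map term_negi l) x.
Proof.
  induction l as [|kc l IH]; simpl map; [reflexivity|].
  rewrite tpoly_cons, tpoly_re_cons, <- IH, !trig_term_crot. unfold cadd, crot; simpl. ring.
Qed.

Lemma filter_map_negi (q : (nat -> Z) -> bool) l :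
  filter (fun kc => q (fst kc)) (map term_negi l) = map term_negi (filter (fun kc => q (fst kc)) l).
Proof. apply filter_map_swap. Qed.

Lemma tpoly_torus d l : TorusFun d (tpoly d l).
Proof.
  split.
  - intros x y H. induction l as [|[k c] l IH]; [reflexivity|].
    rewrite !tpoly_cons, IH, !trig_term_crot. simpl. rewrite (phase_ext d k x y H). reflexivity.
  - intros x j Hj. induction l as [|[k c] l IH]; [reflexivity|].
    rewrite !tpoly_cons, IH, (trig_term_shift d k k c x _ (2 * PI * IZR (k j))), crot_2PI_IZR.
    + reflexivity.
    + rewrite phase_upd by auto. ring.
Qed.

Lemma crot_re_lipschitz c u v :
  Rabs (fst (crot c u) - fst (crot c v)) <= (Rabs (fst c) + Rabs (snd c)) * Rabs (u - v).
Proof.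
  destruct (MVT_abs (fun t => fst c * cos t - snd c * sin t)
              (fun t => - fst c * sin t - snd c * cos t) v u) as [z [Hz _]].
  { intros z _. apply is_derive_Reals. auto_derive; auto. ring. }
  unfold crot; simpl. rewrite Hz. apply Rmult_le_compat_r; [apply Rabs_pos|].
  assert (Hs: Rabs (sin z) <= 1) by (apply Rabs_le; pose proof (SIN_bound z); lra).
  assert (Hc: Rabs (cos z) <= 1) by (apply Rabs_le; pose proof (COS_bound z); lra).
  eapply Rle_trans; [apply Rabs_triang|]. rewrite Rabs_Ropp, !Rabs_mult, Rabs_Ropp.
  pose proof (Rabs_pos (fst c)). pose proof (Rabs_pos (snd c)). nra.
Qed.

Lemma phase_lipschitz d k x y del : (forall j, (j < d)%nat -> Rabs (y j - x j) <= del) ->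
  Rabs (phase d k y - phase d k x) <= 2 * PI * rsum d (fun j => Rabs (IZR (k j))) * del.
Proof.
  intros H. pose proof PI_RGT_0. unfold phase.
  rewrite <- Rmult_minus_distr_l, <- rsum_minus, Rabs_mult, Rabs_right by lra.
  rewrite (Rmult_assoc (2 * PI)). apply Rmult_le_compat_l; [lra|].
  eapply Rle_trans; [apply rsum_abs|]. rewrite Rmult_comm, <- rsum_scal.
  apply rsum_le. intros j Hj. rewrite <- Rmult_minus_distr_l, Rabs_mult.
  specialize (H j Hj). pose proof (Rabs_pos (IZR (k j))). nra.
Qed.

Lemma tpoly_re_lipschitz d l : exists K, 0 <= K /\ forall x y del,
  (forall j, (j < d)%nat -> Rabs (y j - x j) <= del) ->
  Rabs (tpoly_re d l y - tpoly_re d l x) <= K * del.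
Proof.
  induction l as [|[k c] l [K [HK IH]]].
  - exists 0. split; [lra|]. intros x y del _.
    unfold tpoly_re; simpl. rewrite Rminus_0_r, Rabs_R0. lra.
  - set (S := rsum d (fun j => Rabs (IZR (k j)))).
    assert (HS: 0 <= S) by (apply rsum_nonneg; intros; apply Rabs_pos).
    exists ((Rabs (fst c) + Rabs (snd c)) * (2 * PI * S) + K). split.
    { pose proof PI_RGT_0. pose proof (Rabs_pos (fst c)). pose proof (Rabs_pos (snd c)).
      apply Rplus_le_le_0_compat; auto. apply Rmult_le_pos; [lra|]. apply Rmult_le_pos; lra. }
    intros x y del H.
    rewrite !tpoly_re_cons, !trig_term_crot. cbn [fst snd].
    set (u := fst (crot c (phase d k y))). set (u' := fst (crot c (phase d k x))).
    replace (u + tpoly_re d l y - (u' + tpoly_re d l x))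
      with ((u - u') + (tpoly_re d l y - tpoly_re d l x)) by ring.
    eapply Rle_trans; [apply Rabs_triang|].
    rewrite Rmult_plus_distr_r. apply Rplus_le_compat; [|apply IH; auto].
    unfold u, u'. eapply Rle_trans; [apply crot_re_lipschitz|].
    rewrite Rmult_assoc. apply Rmult_le_compat_l.
    + pose proof (Rabs_pos (fst c)). pose proof (Rabs_pos (snd c)). lra.
    + apply phase_lipschitz; auto.
Qed.

Lemma tpoly_re_contd d l : contd d (tpoly_re d l).
Proof.
  destruct (tpoly_re_lipschitz d l) as [K [HK H]].
  intros x eps Heps. exists (eps / (K + 1)). split; [apply Rdiv_lt_0_compat; lra|].
  intros y Hy _. eapply Rle_lt_trans.
  - apply (H x y (eps / (K + 1))). intros j Hj. apply Rlt_le; auto.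
  - apply Rlt_le_trans with ((K + 1) * (eps / (K + 1))).
    + apply Rmult_lt_compat_r; [apply Rdiv_lt_0_compat|]; lra.
    + right. field. lra.
Qed.

Definition term_deriv (i : nat) (kc : term) : term :=
  let s := 2 * PI * IZR (fst kc i) in (fst kc, (- s * snd (snd kc), s * fst (snd kc))).

Lemma trig_term_re_deriv d kc x i : (i < d)%nat ->
  derivable_pt_lim (fun t => fst (trig_term d kc (upd x i (x i + t)))) 0
    (fst (trig_term d (term_deriv i kc) x)).
Proof.
  intros Hi. destruct kc as [k [a b0]]. apply is_derive_Reals.
  apply (is_derive_ext (fun t => a * cos (phase d k x + 2 * PI * IZR (k i) * t)
                                 - b0 * sin (phase d k x + 2 * PI * IZR (k i) * t))).
  { intros t. rewrite trig_term_crot, phase_upd by auto. simpl. do 3 f_equal; ring. }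
  rewrite trig_term_crot. unfold term_deriv, crot. cbn [fst snd].
  generalize (phase d k x) (2 * PI * IZR (k i)). intros th s.
  auto_derive; auto. rewrite Rmult_0_r, Rplus_0_r. ring.
Qed.

Lemma tpoly_re_deriv d l x i : (i < d)%nat ->
  derivable_pt_lim (fun t => tpoly_re d l (upd x i (x i + t))) 0
    (tpoly_re d (map (term_deriv i) l) x).
Proof.
  intros Hi. induction l as [|kc l IH].
  - apply derivable_pt_lim_const.
  - apply (derivable_pt_lim_plus (fun t => fst (trig_term d kc (upd x i (x i + t))))
                                 (fun t => tpoly_re d l (upd x i (x i + t)))); auto.
    apply trig_term_re_deriv; auto.
Qed.

Lemma tpoly_re_Ck d n l : Ck d n (tpoly_re d l).
Proof.
  revert l. induction n as [|n IH]; intros l; simpl.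
  - apply tpoly_re_contd.
  - split; [apply tpoly_re_contd|]. intros i Hi. exists (tpoly_re d (map (term_deriv i) l)).
    split; auto. intros x. apply tpoly_re_deriv; auto.
Qed.

Lemma tpoly_smooth d l : SmoothTorusC d (tpoly d l).
Proof.
  split; [apply tpoly_torus|]. split; intros n.
  - apply (tpoly_re_Ck d n l).
  - rewrite (functional_extensionality _ (tpoly_re d (map term_negi l)) (tpoly_im d l)).
    apply tpoly_re_Ck.
Qed.

Lemma is_RInt_const_01 (v : R) : is_RInt (fun _ => v) 0 1 v.
Proof.
  pose proof (is_RInt_const 0 1 v) as H. rewrite Rminus_0_r in H.
  exact (eq_ind _ (is_RInt (fun _ => v) 0 1) H _ (scal_one v)).
Qed.

Lemma trig_term_re_RInt d k c x j : (j < d)%nat ->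
  is_RInt (fun t => fst (trig_term d (k, c) (upd x j t))) 0 1
    (if Z.eqb (k j) 0 then fst (trig_term d (k, c) x) else 0).
Proof.
  intros Hj. rewrite trig_term_crot. cbn [fst snd].
  set (s := 2 * PI * IZR (k j)). set (th := phase d k x - s * x j).
  apply (is_RInt_ext (fun t => fst c * cos (th + s * t) - snd c * sin (th + s * t))).
  { intros t _. rewrite trig_term_crot, phase_upd by auto. unfold crot, th, s. simpl.
    do 3 f_equal; ring. }
  destruct (Z.eqb_spec (k j) 0) as [Hk|Hk].
  - apply (is_RInt_ext (fun _ => fst (crot c (phase d k x)))); [|apply is_RInt_const_01].
    intros t _. unfold th, s, crot. rewrite Hk. simpl. do 3 f_equal; ring.
  - assert (Hs: s <> 0).
    { unfold s. pose proof PI_RGT_0. apply Rmult_integral_contrapositive. split; [lra|].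
      apply not_0_IZR; auto. }
    set (F := fun t => (fst c * sin (th + s * t) + snd c * cos (th + s * t)) / s).
    pose proof (is_RInt_derive F (fun t => fst c * cos (th + s * t) - snd c * sin (th + s * t))
                  0 1) as HF.
    specialize (HF ltac:(intros t _; unfold F; auto_derive; auto; field; auto)).
    specialize (HF ltac:(intros t _;
      apply (ex_derive_continuous (K:=R_AbsRing) (V:=R_NormedModule)); auto_derive; auto)).
    assert (E: F 1 - F 0 = 0).
    { unfold F. rewrite Rmult_1_r, Rmult_0_r, Rplus_0_r. unfold s.
      rewrite sin_plus, cos_plus. destruct (cos_sin_2PI_IZR (k j)) as [-> ->]. field.
      split; [apply not_0_IZR; auto | apply PI_neq0]. }
    change (minus (F 1) (F 0)) with (F 1 - F 0) in HF. rewrite E in HF. exact HF.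
Qed.

Lemma tpoly_re_RInt d l x j : (j < d)%nat ->
  is_RInt (fun t => tpoly_re d l (upd x j t)) 0 1
    (tpoly_re d (filter (fun kc => Z.eqb (fst kc j) 0) l) x).
Proof.
  intros Hj. induction l as [|[k c] l IH].
  - apply is_RInt_const_01.
  - replace (tpoly_re d (filter _ ((k, c) :: l)) x)
      with ((if Z.eqb (k j) 0 then fst (trig_term d (k, c) x) else 0)
            + tpoly_re d (filter (fun kc => Z.eqb (fst kc j) 0) l) x).
    + apply (is_RInt_plus (fun t => fst (trig_term d (k, c) (upd x j t)))
                          (fun t => tpoly_re d l (upd x j t))); auto.
      apply trig_term_re_RInt; auto.
    + simpl filter. destruct (Z.eqb (k j) 0); [reflexivity|apply Rplus_0_l].
Qed.

Lemma tpoly_im_RInt d l x j : (j < d)%nat ->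
  is_RInt (fun t => snd (tpoly d l (upd x j t))) 0 1
    (snd (tpoly d (filter (fun kc => Z.eqb (fst kc j) 0) l) x)).
Proof.
  intros Hj. rewrite tpoly_im, <- (filter_map_negi (fun k => Z.eqb (k j) 0)).
  apply (is_RInt_ext (fun t => tpoly_re d (map term_negi l) (upd x j t))).
  - intros t _. symmetry. apply tpoly_im.
  - apply tpoly_re_RInt; auto.
Qed.

Lemma RiemannInt_of_is_RInt (f : R -> R) v :
  is_RInt f 0 1 v -> exists pr : Riemann_integrable f 0 1, RiemannInt pr = v.
Proof.
  intros H. assert (pr : Riemann_integrable f 0 1) by (apply ex_RInt_Reals_0; exists v; auto).
  exists pr. rewrite <- RInt_Reals. apply is_RInt_unique. auto.
Qed.

Lemma tpoly_RiemannInt_coord d l x j : (j < d)%nat ->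
  (exists pr : Riemann_integrable (fun t => fst (tpoly d l (upd x j t))) 0 1,
     RiemannInt pr = fst (tpoly d (filter (fun kc => Z.eqb (fst kc j) 0) l) x)) /\
  (exists pr : Riemann_integrable (fun t => snd (tpoly d l (upd x j t))) 0 1,
     RiemannInt pr = snd (tpoly d (filter (fun kc => Z.eqb (fst kc j) 0) l) x)).
Proof.
  intros Hj. split; apply RiemannInt_of_is_RInt; [apply tpoly_re_RInt | apply tpoly_im_RInt]; auto.
Qed.

Definition zero_freq (m : nat) (k : nat -> Z) : bool :=
  forallb (fun j => Z.eqb (k j) 0) (seq 0 m).

Lemma zero_freq_S m k : zero_freq (S m) k = andb (zero_freq m k) (Z.eqb (k m) 0).
Proof. unfold zero_freq. rewrite seq_S, forallb_app. simpl. rewrite Bool.andb_true_r. reflexivity.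
  Qed.

Lemma zero_freq_iff m k : zero_freq m k = true <-> forall j, (j < m)%nat -> k j = 0%Z.
Proof.
  unfold zero_freq. rewrite forallb_forall. split.
  - intros H j Hj. apply Z.eqb_eq, H, in_seq. lia.
  - intros H j Hj. apply in_seq in Hj. apply Z.eqb_eq, H. lia.
Qed.

Lemma zero_freq_false m k : zero_freq m k = false -> exists j, (j < m)%nat /\ k j <> 0%Z.
Proof.
  intros H. apply NNPP. intros N. apply Bool.not_true_iff_false in H. apply H, zero_freq_iff.
  intros j Hj. apply NNPP. intros Hk. apply N. eauto.
Qed.

Lemma last_nonzero_index m (k : nat -> Z) : (exists j, (j < m)%nat /\ k j <> 0%Z) ->
  exists i, (i < m)%nat /\ k i <> 0%Z /\ forall l, (i < l < m)%nat -> k l = 0%Z.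
Proof.
  induction m as [|m IH]; intros [j [Hj Hkj]]; [lia|].
  destruct (Z.eq_dec (k m) 0) as [Hm|Hm].
  - destruct IH as [i [Hi [Hki Habove]]].
    + exists j. split; auto. destruct (Nat.eq_dec j m) as [->|]; [contradiction|lia].
    + exists i. repeat split; [lia|auto|]. intros l Hl. destruct (Nat.eq_dec l m) as [->|]; auto.
      apply Habove. lia.
  - exists m. repeat split; auto; lia.
Qed.

Lemma tpoly_zero_freq_const d l x y : (forall kc, In kc l -> zero_freq d (fst kc) = true) ->
  tpoly d l x = tpoly d l y.
Proof.
  intros H. induction l as [|[k c] l IH]; [reflexivity|].
  rewrite !tpoly_cons, IH by (intros; apply H; right; auto).
  assert (Hk: forall j, (j < d)%nat -> k j = 0%Z) by (apply zero_freq_iff, (H (k, c)); left; auto).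
  rewrite !trig_term_const by auto. reflexivity.
Qed.

Lemma tpoly_re_IntUpTo d m l x : (m <= d)%nat ->
  IntUpTo m (tpoly_re d l) x (tpoly_re d (filter (fun kc => zero_freq m (fst kc)) l) x).
Proof.
  revert l x. induction m as [|m IH]; intros l x Hm.
  - cbn [IntUpTo]. f_equal. exact (List.filter_true l).
  - exists (fun t => tpoly_re d (filter (fun kc => zero_freq m (fst kc)) l) (upd x m t)). split.
    + intros t. apply IH. lia.
    + apply RiemannInt_of_is_RInt.
      replace (filter (fun kc => zero_freq (S m) (fst kc)) l) with
        (filter (fun kc => Z.eqb (fst kc m) 0) (filter (fun kc => zero_freq m (fst kc)) l)).
      * apply tpoly_re_RInt. lia.
      * clear IH. induction l as [|kc l IHl]; [reflexivity|]. cbn [filter]. rewrite zero_freq_S.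
        destruct (zero_freq m (fst kc)), (Z.eqb (fst kc m) 0) eqn:E; cbn [filter andb];
          rewrite ?E, ?IHl; reflexivity.
Qed.

Lemma tpoly_LebIntC d l :
  LebIntC d (tpoly d l) (tpoly d (filter (fun kc => zero_freq d (fst kc)) l) (fun _ => 0)).
Proof.
  assert (H0: forall l' x, tpoly d (filter (fun kc => zero_freq d (fst kc)) l') x
                       = tpoly d (filter (fun kc => zero_freq d (fst kc)) l') (fun _ => 0)).
  { intros l' x. apply tpoly_zero_freq_const. intros kc Hin. apply filter_In in Hin. apply Hin. }
  split; intros x; rewrite <- (H0 l x).
  - apply (tpoly_re_IntUpTo d d l x). lia.
  - rewrite tpoly_im, <- (filter_map_negi (zero_freq d)).
    rewrite (functional_extensionality _ _ (tpoly_im d l)).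
    apply tpoly_re_IntUpTo. lia.
Qed.

Definition freqA (d : nat) (A : nat -> nat -> Z) (k : nat -> Z) : nat -> Z :=
  fun i => Zsum d (fun j => (A i j * k j)%Z).

Lemma phase_Tmap d A b k x : phase d k (Tmap d A b x) = phase d (freqA d A k) x + phase d k b.
Proof.
  unfold phase. rewrite <- Rmult_plus_distr_l. f_equal.
  rewrite (rsum_ext d _
    (fun j => rsum d (fun i => IZR (k j) * (x i * IZR (A i j))) + IZR (k j) * b j)).
  - rewrite rsum_plus, rsum_swap. f_equal. apply rsum_ext. intros i _.
    unfold freqA. rewrite IZR_Zsum, Rmult_comm, <- rsum_scal. apply rsum_ext. intros j _.
    rewrite mult_IZR. ring.
  - intros j Hj. unfold Tmap. apply Nat.ltb_lt in Hj. rewrite Hj, rsum_scal. ring.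
Qed.

Definition term_Tmap d A (b : pt) (kc : term) : term :=
  (freqA d A (fst kc), crot (snd kc) (phase d (fst kc) b)).

Lemma tpoly_Tmap d A b l x : tpoly d l (Tmap d A b x) = tpoly d (map (term_Tmap d A b) l) x.
Proof.
  induction l as [|[k c] l IH]; [reflexivity|]. simpl map.
  rewrite !tpoly_cons, IH, (trig_term_shift d k (freqA d A k) c x _ (phase d k b)); [reflexivity|].
  apply phase_Tmap.
Qed.

Definition Titer d A b n (x : pt) : pt := Nat.iter n (Tmap d A b) x.

Lemma Titer_Tmap d A b n x : Titer d A b n (Tmap d A b x) = Titer d A b (S n) x.
Proof. unfold Titer. rewrite Nat.iter_succ_r. reflexivity. Qed.

Definition terms_Titer d A b n (l : list term) : list term := Nat.iter n (map (term_Tmap d A b)) l.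

Lemma tpoly_Titer d A b n l x : tpoly d l (Titer d A b n x) = tpoly d (terms_Titer d A b n l) x.
Proof.
  revert l x. induction n as [|n IH]; intros l x; [reflexivity|].
  unfold Titer, terms_Titer. rewrite Nat.iter_succ, Nat.iter_succ_r.
  rewrite tpoly_Tmap. apply IH.
Qed.

Lemma upd_upd (x : pt) j s t : upd (upd x j s) j t = upd x j t.
Proof. apply functional_extensionality. intros i. unfold upd. destruct (Nat.eqb i j); auto. Qed.

Lemma upd_same (x : pt) j s : upd x j s j = s.
Proof. unfold upd. rewrite Nat.eqb_refl. auto. Qed.

Lemma upd_id (x : pt) j : upd x j (x j) = x.
Proof.
  apply functional_extensionality. intros i. unfold upd. destruct (Nat.eqb_spec i j); subst; auto.
Qed.

Lemma torus_shift_IZR {V} d (f : pt -> V) x j z : TorusFun d f -> (j < d)%nat ->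
  f (upd x j (x j + IZR z)) = f x.
Proof.
  intros [_ Hp] Hj.
  assert (Hnat: forall y n, f (upd y j (y j + INR n)) = f y).
  { intros y n. induction n as [|n IH].
    - rewrite Rplus_0_r, upd_id. reflexivity.
    - rewrite S_INR, <- IH, <- (Hp (upd y j (y j + INR n)) j Hj), upd_upd, upd_same, Rplus_assoc.
      reflexivity. }
  destruct (Z_le_gt_dec 0 z).
  - rewrite <- (Z2Nat.id z), <- INR_IZR_INZ by lia. apply Hnat.
  - rewrite <- (Hnat _ (Z.to_nat (- z))), upd_upd, upd_same, INR_IZR_INZ, Z2Nat.id, opp_IZR by lia.
    replace (x j + IZR z + - IZR z) with (x j) by ring. rewrite upd_id. reflexivity.
Qed.

Lemma torus_shift {V} d (f : pt -> V) (x y : pt) : TorusFun d f ->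
  (forall j, (j < d)%nat -> exists z, y j = x j + IZR z) -> f y = f x.
Proof.
  intros Hf H.
  set (mix := fun m (j : nat) => if Nat.ltb j m then y j else x j).
  assert (Hm: forall m, (m <= d)%nat -> f (mix m) = f x).
  { induction m as [|m IH]; intros Hmd; [reflexivity|].
    destruct (H m ltac:(lia)) as [z Hz].
    replace (mix (S m)) with (upd (mix m) m (mix m m + IZR z)).
    - rewrite (torus_shift_IZR d) by (auto; lia). apply IH. lia.
    - apply functional_extensionality. intros j. unfold mix, upd.
      destruct (Nat.eqb_spec j m) as [->|Hne].
      + rewrite Nat.ltb_irrefl, Hz.
        replace (m <? S m) with true by (symmetry; apply Nat.ltb_lt; lia). reflexivity.
      + destruct (Nat.ltb_spec j m), (Nat.ltb_spec j (S m)); auto; lia. }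
  rewrite <- (Hm d (le_n d)). apply (proj1 Hf).
  intros j Hj. unfold mix. apply Nat.ltb_lt in Hj. rewrite Hj. reflexivity.
Qed.

Definition frac_pt d (y : pt) : pt :=
  fun j => if Nat.ltb j d then y j - IZR (up (y j)) + 1 else 0.

Lemma frac_pt_bound d y j : (j < d)%nat -> 0 <= frac_pt d y j <= 1.
Proof.
  intros Hj. unfold frac_pt. apply Nat.ltb_lt in Hj. rewrite Hj. destruct (archimed (y j)). lra.
Qed.

Lemma torus_frac_pt {V} d (f : pt -> V) y : TorusFun d f -> f (frac_pt d y) = f y.
Proof.
  intros Hf. apply (torus_shift d); auto. intros j Hj. exists (1 - up (y j))%Z.
  unfold frac_pt. apply Nat.ltb_lt in Hj. rewrite Hj, minus_IZR. ring.
Qed.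

Lemma ContTorus_tpoly_re d l : ContTorus d (tpoly_re d l).
Proof.
  split; [split|apply tpoly_re_contd]; intros; unfold tpoly_re; f_equal; apply tpoly_torus; auto.
Qed.

Lemma ContTorus_const d (c : R) : ContTorus d (fun _ => c).
Proof.
  split; [split; auto|]. intros x eps Heps. exists 1. split; [lra|].
  intros. rewrite Rminus_diag, Rabs_R0; auto.
Qed.

Lemma ContTorus_vadd d f w : ContTorus d f -> (forall j, (d <= j)%nat -> w j = 0) ->
  ContTorus d (fun x => f (vadd x w)).
Proof.
  intros [[Hext Hper] Hc] Hw. split; [split|].
  - intros x y H. apply Hext. intros j Hj. unfold vadd. rewrite H; auto.
  - intros x j Hj. rewrite <- (Hper (vadd x w) j Hj). f_equal.
    apply functional_extensionality. intros i. unfold vadd, upd.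
    destruct (Nat.eqb_spec i j); subst; ring.
  - intros x eps Heps. destruct (Hc (vadd x w) eps Heps) as [del [Hdel H]].
    exists del. split; auto. intros y Hy Hout. apply H; intros j Hj; unfold vadd.
    + replace (y j + w j - (x j + w j)) with (y j - x j) by ring. auto.
    + rewrite Hout; auto.
Qed.

(** * Ultrafilters and ultralimits *)

Record UltrafilterNat (U : (nat -> Prop) -> Prop) : Prop := {
  uf_nonempty : forall P, U P -> exists n, P n;
  uf_and : forall P Q, U P -> U Q -> U (fun n => P n /\ Q n);
  uf_mono : forall P Q : nat -> Prop, (forall n, P n -> Q n) -> U P -> U Q;
  uf_ultra : forall P, U P \/ U (fun n => ~ P n);
  uf_tail : forall N, U (fun n => (N <= n)%nat) }.

Lemma ultrafilter_nat_exists : exists U, UltrafilterNat U.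
Proof.
  destruct (filter.ultraFilterLemma filter.eventually_filter) as [G [HG HsubG]].
  exists G. split.
  - intros P HP. exact (filter.filter_ex HP).
  - intros P Q. apply filter.filterI.
  - intros P Q H. apply filter.filterS. exact H.
  - intros P. exact (filter.in_ultra_setVsetC P HG).
  - intros N. apply HsubG. exists N; [exact I|]. intros n Hn. exact (ssrbool.elimT ssrnat.leP Hn).
Qed.

Section Ultralimit.
Variable U : (nat -> Prop) -> Prop.
Hypothesis HU : UltrafilterNat U.

Lemma uf_all (P : nat -> Prop) : (forall n, P n) -> U P.
Proof. intros H. apply (uf_mono U HU (fun n => (0 <= n)%nat)); auto. apply (uf_tail U HU). Qed.

Lemma uf_forall_lt d (P : nat -> nat -> Prop) :
  (forall j, (j < d)%nat -> U (P j)) -> U (fun m => forall j, (j < d)%nat -> P j m).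
Proof.
  induction d as [|d IH]; intros H.
  - apply uf_all. intros; lia.
  - apply (uf_mono U HU (fun m => (forall j, (j < d)%nat -> P j m) /\ P d m)).
    + intros m [Hlt Hd] j Hj. destruct (Nat.eq_dec j d) as [->|]; auto. apply Hlt. lia.
    + apply (uf_and U HU); auto.
Qed.

Definition Uconv (a : nat -> R) (l : R) : Prop :=
  forall eps, 0 < eps -> U (fun n => Rabs (a n - l) < eps).

Lemma Uconv_unique a l1 l2 : Uconv a l1 -> Uconv a l2 -> l1 = l2.
Proof.
  intros H1 H2. apply NNPP. intros Hne.
  set (e := Rabs (l1 - l2) / 2).
  assert (He: 0 < e) by (unfold e; apply Rdiv_lt_0_compat; [apply Rabs_pos_lt; lra|lra]).
  destruct (uf_nonempty U HU _ (uf_and U HU _ _ (H1 e He) (H2 e He))) as [n [Hn1 Hn2]].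
  pose proof (Rabs_triang (l1 - a n) (a n - l2)) as Htri. rewrite <- Rabs_Ropp in Hn1.
  replace (l1 - a n + (a n - l2)) with (l1 - l2) in Htri by ring.
  replace (- (a n - l1)) with (l1 - a n) in Hn1 by ring. unfold e in *. lra.
Qed.

Lemma Uconv_const c : Uconv (fun _ => c) c.
Proof. intros eps Heps. apply uf_all. intros n. rewrite Rminus_diag, Rabs_R0. auto. Qed.

Lemma Uconv_lin a b la lb r :
  Uconv a la -> Uconv b lb -> Uconv (fun n => r * a n + b n) (r * la + lb).
Proof.
  intros Ha Hb eps Heps.
  set (e := eps / (2 * (Rabs r + 1))).
  pose proof (Rabs_pos r).
  assert (He: 0 < e) by (unfold e; apply Rdiv_lt_0_compat; lra).
  assert (Hre: Rabs r * e < eps / 2).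
  { apply Rlt_le_trans with ((Rabs r + 1) * e); [nra|]. right. unfold e. field. lra. }
  apply (uf_mono U HU (fun n => Rabs (a n - la) < e /\ Rabs (b n - lb) < eps / 2));
    [|apply (uf_and U HU); [apply Ha | apply Hb]; lra].
  intros n [Hn1 Hn2].
  replace (r * a n + b n - (r * la + lb)) with (r * (a n - la) + (b n - lb)) by ring.
  eapply Rle_lt_trans; [apply Rabs_triang|]. rewrite Rabs_mult.
  assert (Rabs r * Rabs (a n - la) <= Rabs r * e) by (apply Rmult_le_compat_l; lra). lra.
Qed.

Lemma Uconv_nonneg a l : (forall n, 0 <= a n) -> Uconv a l -> 0 <= l.
Proof.
  intros H Hc. apply Rnot_lt_le. intros Hl.
  destruct (uf_nonempty U HU _ (Hc (- l) ltac:(lra))) as [n Hn].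
  apply Rabs_lt_between' in Hn. specialize (H n). lra.
Qed.

Lemma Uconv_abs_lower a l del : Uconv a l -> (forall n, del <= Rabs (a n)) -> del <= Rabs l.
Proof.
  intros Ha H. apply Rnot_lt_le. intros Hl.
  destruct (uf_nonempty U HU _ (Ha (del - Rabs l) ltac:(lra))) as [n Hn].
  pose proof (Rabs_triang (a n - l) l) as Htri. replace (a n - l + l) with (a n) in Htri by ring.
  specialize (H n). lra.
Qed.

Lemma Uconv_inv_succ a C : (forall n, Rabs (a n) <= C / INR (S n)) -> Uconv a 0.
Proof.
  intros Ha eps Heps.
  assert (HC: 0 <= C).
  { specialize (Ha O). pose proof (Rabs_pos (a O)). simpl in Ha. rewrite Rdiv_1_r in Ha. lra. }
  destruct (archimed_cor1 (eps / (C + 1)) ltac:(apply Rdiv_lt_0_compat; lra)) as [N [HN HN0]].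
  apply (uf_mono U HU (fun n => (N <= n)%nat)); [|apply (uf_tail U HU)].
  intros n Hn. rewrite Rminus_0_r. eapply Rle_lt_trans; [apply Ha|].
  assert (HSn: INR N <= INR (S n)) by (apply le_INR; lia).
  assert (HN1: 0 < INR N) by (apply lt_0_INR; lia).
  apply Rle_lt_trans with (C / INR N).
  - unfold Rdiv. apply Rmult_le_compat_l; auto. apply Rinv_le_contravar; lra.
  - apply Rle_lt_trans with ((C + 1) * / INR N).
    + unfold Rdiv. apply Rmult_le_compat_r; [apply Rlt_le, Rinv_0_lt_compat|]; lra.
    + apply Rmult_lt_reg_l with (/ (C + 1)); [apply Rinv_0_lt_compat; lra|].
      rewrite <- Rmult_assoc, Rinv_l, Rmult_1_l by lra. rewrite Rmult_comm. exact HN.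
Qed.

Lemma Uconv_bounded a M : (forall n, Rabs (a n) <= M) -> exists l, Uconv a l.
Proof.
  intros HM.
  set (E := fun r => U (fun n => r <= a n)).
  assert (Hb: bound E).
  { exists M. intros r Er. destruct (uf_nonempty U HU _ Er) as [n Hn].
    specialize (HM n). apply Rabs_le_between in HM. lra. }
  assert (Hne: exists r, E r).
  { exists (- M). apply uf_all. intros n. specialize (HM n). apply Rabs_le_between in HM. lra. }
  destruct (completeness E Hb Hne) as [l [Hub Hlub]].
  exists l. intros eps Heps.
  assert (Hlow: U (fun n => l - eps < a n)).
  { apply NNPP. intros N. assert (l <= l - eps); [|lra].
    apply Hlub. intros r Er. apply Rnot_lt_le. intros Hr. apply N.
    apply (uf_mono U HU _ _ (fun n H => Rlt_le_trans _ _ _ Hr H) Er). }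
  assert (Hup: U (fun n => a n < l + eps)).
  { destruct (uf_ultra U HU (fun n => a n < l + eps)) as [H|H]; auto.
    assert (HE: E (l + eps)) by (apply (uf_mono U HU _ _ (fun n H => Rnot_lt_le _ _ H) H)).
    specialize (Hub _ HE). lra. }
  apply (uf_mono U HU _ _ (fun n H => proj2 (Rabs_lt_between' _ _ _) H)).
  apply (uf_and U HU _ _ Hlow Hup).
Qed.

Definition Ulim (a : nat -> R) : R := epsilon (inhabits 0) (Uconv a).

Lemma Ulim_spec a : (exists l, Uconv a l) -> Uconv a (Ulim a).
Proof. apply epsilon_spec. Qed.

Lemma Ulim_eq a l : Uconv a l -> Ulim a = l.
Proof. intros H. apply (Uconv_unique a); auto. apply Ulim_spec. eauto. Qed.

End Ultralimit.

(* If [|f (ys m)| > m], continuity of [f] at an ultralimit of representatives of the [ys m] in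
   [[0, 1]^d] is contradicted. *)
Lemma ContTorus_bounded d f : ContTorus d f -> exists M, forall x, Rabs (f x) <= M.
Proof.
  intros [Ht Hc]. apply NNPP. intros Hunb.
  assert (H: forall m : nat, exists x, INR m < Rabs (f x)).
  { intros m. apply NNPP. intros N. apply Hunb. exists (INR m). intros x.
    apply Rnot_lt_le. intros Hx. apply N. eauto. }
  destruct ultrafilter_nat_exists as [U HU].
  destruct (choice _ H) as [ys Hys].
  set (zs := fun m => frac_pt d (ys m)).
  set (p := fun j => if Nat.ltb j d then Ulim U (fun m => zs m j) else 0).
  assert (Hp: forall j, (j < d)%nat -> Uconv U (fun m => zs m j) (p j)).
  { intros j Hj. unfold p. apply Nat.ltb_lt in Hj as Hj'. rewrite Hj'. apply Ulim_spec.
    apply (Uconv_bounded U HU _ 1). intros m. apply Rabs_le_between.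
    pose proof (frac_pt_bound d (ys m) j Hj). unfold zs. lra. }
  destruct (Hc p 1 ltac:(lra)) as [del [Hdel Hcd]].
  destruct (INR_unbounded (Rabs (f p) + 1)) as [K HK].
  destruct (uf_nonempty U HU _ (uf_and U HU _ _
              (uf_forall_lt U HU d (fun j m => Rabs (zs m j - p j) < del)
                 (fun j Hj => Hp j Hj del Hdel))
              (uf_tail U HU K))) as [m [Hclose HKm]].
  assert (Hout: forall j, (d <= j)%nat -> zs m j = p j).
  { intros j Hj. unfold zs, frac_pt, p. apply Nat.ltb_ge in Hj. rewrite Hj. reflexivity. }
  specialize (Hcd (zs m) Hclose Hout). unfold zs in Hcd. rewrite (torus_frac_pt d) in Hcd by auto.
  specialize (Hys m). assert (INR K <= INR m) by (apply le_INR; auto).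
  pose proof (Rabs_triang (f (ys m) - f p) (f p)) as Htri.
  replace (f (ys m) - f p + f p) with (f (ys m)) in Htri by ring. lra.
Qed.

(** * Invariant states *)

Lemma state_ext (L : (pt -> R) -> R) f g : (forall x, f x = g x) -> L f = L g.
Proof. intros H. f_equal. apply functional_extensionality. auto. Qed.

Section InvariantStates.
Variables (d : nat) (A : nat -> nat -> Z) (b : pt).

Section State.
Variable L : (pt -> R) -> R.
Hypothesis HL : InvariantState d A b L.

Lemma state_zero : L (fun _ => 0) = 0.
Proof.
  destruct HL as [Hlin _].
  pose proof (Hlin _ _ 1 (ContTorus_const d 0) (ContTorus_const d 0)) as H. cbv beta in H.
  rewrite (state_ext L (fun x => 1 * 0 + 0) (fun _ => 0)) in H by (intros; ring). lra.
Qed.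

Lemma state_plus f g : ContTorus d f -> ContTorus d g -> L (fun x => f x + g x) = L f + L g.
Proof.
  intros Hf Hg. destruct HL as [Hlin _]. rewrite <- (Rmult_1_l (L f)), <- Hlin by auto.
  apply state_ext. intros; ring.
Qed.

Lemma state_opp f : ContTorus d f -> L (fun x => - f x) = - L f.
Proof.
  intros Hf. destruct HL as [Hlin _].
  rewrite (state_ext L _ (fun x => -1 * f x + 0)) by (intros; ring).
  rewrite Hlin, state_zero by (auto; apply ContTorus_const). ring.
Qed.

End State.

Section Unipotent.
Hypothesis hA : UpperUnipotent d A.
Hypothesis hUE : UniquelyErgodic d A b.

Definition linA (w : pt) : pt :=
  fun j => if Nat.ltb j d then rsum d (fun i => w i * IZR (A i j)) else 0.

Lemma Tmap_vadd x w : (forall j, (d <= j)%nat -> w j = 0) ->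
  Tmap d A b (vadd x w) = vadd (Tmap d A b x) (linA w).
Proof.
  intros Hw. apply functional_extensionality. intros j. unfold Tmap, vadd, linA.
  destruct (Nat.ltb_spec j d).
  - rewrite (rsum_ext d _ (fun i => x i * IZR (A i j) + w i * IZR (A i j))), rsum_plus
      by (intros; ring).
    ring.
  - rewrite Hw by lia. ring.
Qed.

Lemma linA_low w s j : (forall i, (i < s)%nat -> w i = 0) -> (j <= s)%nat -> (j < d)%nat ->
  linA w j = w j.
Proof.
  intros Hw Hjs Hj. destruct hA as [Hdiag Hlow]. unfold linA.
  apply Nat.ltb_lt in Hj as Hj'. rewrite Hj'.
  rewrite (rsum_single d (fun i => w i * IZR (A i j)) j Hj).
  - rewrite Hdiag by auto. simpl. ring.
  - intros i Hi Hij. destruct (Nat.lt_ge_cases i j).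
    + rewrite Hw by lia. ring.
    + rewrite Hlow by lia. simpl. ring.
Qed.

Definition translation_invariant (L : (pt -> R) -> R) (s : nat) : Prop :=
  forall w, (forall j, ((j < s)%nat \/ (d <= j)%nat) -> w j = 0) ->
  forall f, ContTorus d f -> L (fun x => f (vadd x w)) = L f.

(* [T (x + w) = T x + w + w'] with [w'] supported on indices [> s], so the translate of [L] by [w]
   is again invariant, hence equal to [L]. *)
Lemma translation_invariant_step L s : InvariantState d A b L ->
  translation_invariant L (S s) -> translation_invariant L s.
Proof.
  intros HL IH w Hw f Hf.
  assert (Hwd: forall j, (d <= j)%nat -> w j = 0) by (intros; apply Hw; right; auto).
  set (w' := fun j => linA w j - w j).
  assert (Hw': forall j, ((j < S s)%nat \/ (d <= j)%nat) -> w' j = 0).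
  { intros j Hj. unfold w'. destruct (Nat.lt_ge_cases j d) as [Hjd|Hjd].
    - rewrite (linA_low w s j); [ring| |lia|auto]. intros i Hi. apply Hw. left; auto.
    - unfold linA. apply Nat.ltb_ge in Hjd as Hjd'. rewrite Hjd', Hwd by auto. ring. }
  assert (Hw'd: forall j, (d <= j)%nat -> w' j = 0) by (intros; apply Hw'; right; auto).
  set (L' := fun g : pt -> R => L (fun x => g (vadd x w))).
  assert (HL': InvariantState d A b L').
  { destruct HL as (Hlin & Hpos & H1 & Hinv). split; [|split; [|split]]; unfold L'.
    - intros g h a Hg Hh. apply (Hlin (fun x => g (vadd x w)) (fun x => h (vadd x w)));
        apply ContTorus_vadd; auto.
    - intros g Hg Hpg. apply Hpos; auto. apply ContTorus_vadd; auto.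
    - apply H1.
    - intros g Hg. set (g' := fun y => g (vadd (vadd y w') w)).
      assert (Hg': ContTorus d g') by (apply (ContTorus_vadd d (fun z => g (vadd z w))); auto;
                                      apply ContTorus_vadd; auto).
      transitivity (L (fun x => g' (Tmap d A b x))).
      { apply state_ext. intros x. unfold g'. rewrite Tmap_vadd by auto. f_equal.
        apply functional_extensionality. intros j. unfold vadd, w'. ring. }
      rewrite Hinv by auto. apply (IH w' Hw' (fun z => g (vadd z w))). apply ContTorus_vadd; auto. }
  destruct hUE as [_ Huniq]. apply (Huniq L' L HL' HL f Hf).
Qed.

Lemma state_translation_invariant L w f : InvariantState d A b L ->
  (forall j, (d <= j)%nat -> w j = 0) -> ContTorus d f -> L (fun x => f (vadd x w)) = L f.
Proof.
  intros HL Hw Hf.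
  assert (H: forall m, translation_invariant L (d - m)).
  { induction m as [|m IH].
    - intros w0 Hw0 f0 _. apply state_ext. intros x. f_equal. apply functional_extensionality.
      intros j. unfold vadd. rewrite Hw0 by lia. ring.
    - destruct (Nat.le_gt_cases d m).
      + replace (d - S m)%nat with (d - m)%nat by lia. exact IH.
      + apply translation_invariant_step; auto.
        replace (S (d - S m)) with (d - m)%nat by lia. exact IH. }
  apply (H d); auto. intros j [Hj|Hj]; [lia|auto].
Qed.

(* Translating by half a period in a coordinate where [k] is nonzero flips the sign of the term. *)
Lemma state_trig_term_nonconst L k c : InvariantState d A b L ->
  zero_freq d k = false -> L (tpoly_re d ((k, c) :: nil)) = 0.
Proof.
  intros HL Hk. destruct (zero_freq_false d k Hk) as [j [Hj Hkj]].
  set (w := fun i => if Nat.eqb i j then / (2 * IZR (k j)) else 0).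
  assert (Hw: forall i, (d <= i)%nat -> w i = 0).
  { intros i Hi. unfold w. destruct (Nat.eqb_spec i j); [lia|auto]. }
  assert (Hph: phase d k w = PI).
  { unfold phase. rewrite (rsum_single d _ j Hj).
    - unfold w. rewrite Nat.eqb_refl. field. apply not_0_IZR; auto.
    - intros i _ Hij. unfold w. apply Nat.eqb_neq in Hij. rewrite Hij. ring. }
  assert (Hflip: forall x, tpoly_re d ((k, c) :: nil) (vadd x w) = - tpoly_re d ((k, c) :: nil) x).
  { intros x. unfold tpoly_re. rewrite !tpoly_cons, !tpoly_nil.
    rewrite (trig_term_shift d k k c x (vadd x w) PI) by (rewrite phase_vadd, Hph; ring).
    rewrite crot_PI, !trig_term_crot. unfold cadd, cscale, crot; simpl. ring. }
  pose proof (state_translation_invariant L w _ HL Hw (ContTorus_tpoly_re d ((k, c) :: nil))) as H.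
  rewrite (state_ext L _ _ Hflip), state_opp in H by (auto; apply ContTorus_tpoly_re).
  lra.
Qed.

Lemma state_tpoly_re_nonconst L l : InvariantState d A b L ->
  (forall kc, In kc l -> zero_freq d (fst kc) = false) -> L (tpoly_re d l) = 0.
Proof.
  intros HL. induction l as [|[k c] l IH]; intros H.
  - apply (state_zero L HL).
  - rewrite (state_ext L _ (fun x => tpoly_re d ((k, c) :: nil) x + tpoly_re d l x)).
    + rewrite (state_plus L HL), (state_trig_term_nonconst L k c HL), IH by
        (try apply ContTorus_tpoly_re; try (intros; apply H; right; auto);
         apply (H (k, c)); left; auto).
      ring.
    + intros x. rewrite !tpoly_re_cons. replace (tpoly_re d nil x) with 0 by reflexivity. ring.
Qed.

End Unipotent.

End InvariantStates.

(** * Birkhoff averages *)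

Section Birkhoff.
Variables (d : nat) (A : nat -> nat -> Z) (b : pt).

Definition birkhoff_sum (h : pt -> R) (n : nat) (x : pt) : R :=
  rsum n (fun m => h (Titer d A b m x)).

Definition birkhoff_avg (h : pt -> R) (n : nat) (x : pt) : R := birkhoff_sum h n x / INR n.

Lemma birkhoff_sum_Tmap h n x :
  birkhoff_sum h n (Tmap d A b x) = birkhoff_sum h n x + h (Titer d A b n x) - h x.
Proof.
  unfold birkhoff_sum.
  rewrite (rsum_ext n _ (fun m => h (Titer d A b (S m) x))) by (intros; apply f_equal, Titer_Tmap).
  pose proof (rsum_telescope n (fun m => h (Titer d A b m x))) as H. rewrite rsum_minus in H.
  change (Titer d A b 0 x) with x in H. lra.
Qed.

Lemma birkhoff_avg_bound h M n x : (0 < n)%nat -> (forall y, Rabs (h y) <= M) ->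
  Rabs (birkhoff_avg h n x) <= M.
Proof.
  intros Hn HM. unfold birkhoff_avg. assert (0 < INR n) by (apply lt_0_INR; auto).
  unfold Rdiv. rewrite Rabs_mult, Rabs_inv, (Rabs_right (INR n)) by lra.
  apply Rmult_le_reg_r with (INR n); auto. rewrite Rmult_assoc, Rinv_l, Rmult_1_r by lra.
  eapply Rle_trans; [apply rsum_abs|]. rewrite Rmult_comm, <- rsum_const. apply rsum_le. auto.
Qed.

Lemma birkhoff_avg_Tmap_diff h M n x : (0 < n)%nat -> (forall y, Rabs (h y) <= M) ->
  Rabs (birkhoff_avg (fun y => h (Tmap d A b y)) n x - birkhoff_avg h n x) <= 2 * M / INR n.
Proof.
  intros Hn HM. assert (0 < INR n) by (apply lt_0_INR; auto). unfold birkhoff_avg.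
  replace (birkhoff_sum (fun y => h (Tmap d A b y)) n x) with (birkhoff_sum h n (Tmap d A b x))
    by (apply rsum_ext; intros; rewrite Titer_Tmap; reflexivity).
  rewrite birkhoff_sum_Tmap.
  replace ((birkhoff_sum h n x + h (Titer d A b n x) - h x) / INR n - birkhoff_sum h n x / INR n)
    with ((h (Titer d A b n x) - h x) / INR n) by (field; lra).
  unfold Rdiv. rewrite Rabs_mult, Rabs_inv, (Rabs_right (INR n)) by lra.
  apply Rmult_le_compat_r; [apply Rlt_le, Rinv_0_lt_compat; lra|].
  unfold Rminus. eapply Rle_trans; [apply Rabs_triang|]. rewrite Rabs_Ropp.
  pose proof (HM (Titer d A b n x)). pose proof (HM x). lra.
Qed.

Section Empirical.
Variable U : (nat -> Prop) -> Prop.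
Hypothesis HU : UltrafilterNat U.
Variables (Ns : nat -> nat) (xs : nat -> pt).
Hypothesis HNs : forall m, (S m <= Ns m)%nat.

Definition empirical_state (f : pt -> R) : R := Ulim U (fun m => birkhoff_avg f (Ns m) (xs m)).

Lemma INR_Ns_pos m : 0 < INR (Ns m).
Proof. apply lt_0_INR. specialize (HNs m). lia. Qed.

Lemma empirical_state_Uconv f : ContTorus d f ->
  Uconv U (fun m => birkhoff_avg f (Ns m) (xs m)) (empirical_state f).
Proof.
  intros Hf. destruct (ContTorus_bounded d f Hf) as [M HM].
  apply (Ulim_spec U). apply (Uconv_bounded U HU _ M). intros m. apply birkhoff_avg_bound; auto.
  specialize (HNs m). lia.
Qed.

Lemma empirical_state_invariant : InvariantState d A b empirical_state.
Proof.
  split; [|split; [|split]].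
  - intros f g a Hf Hg. unfold empirical_state at 1. apply (Ulim_eq U HU).
    replace (fun m => birkhoff_avg (fun x => a * f x + g x) (Ns m) (xs m))
      with (fun m => a * birkhoff_avg f (Ns m) (xs m) + birkhoff_avg g (Ns m) (xs m)).
    + apply (Uconv_lin U HU); apply empirical_state_Uconv; auto.
    + apply functional_extensionality. intros m. unfold birkhoff_avg, birkhoff_sum.
      rewrite rsum_plus, rsum_scal. pose proof (INR_Ns_pos m). field. lra.
  - intros f Hf Hpos. apply (Uconv_nonneg U HU (fun m => birkhoff_avg f (Ns m) (xs m)));
      [|apply empirical_state_Uconv; auto].
    intros m. unfold birkhoff_avg. apply Rmult_le_pos.
    + apply rsum_nonneg. auto.
    + apply Rlt_le, Rinv_0_lt_compat, INR_Ns_pos.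
  - unfold empirical_state. apply (Ulim_eq U HU).
    replace (fun m => birkhoff_avg (fun _ => 1) (Ns m) (xs m)) with (fun _ : nat => 1).
    + apply (Uconv_const U HU).
    + apply functional_extensionality. intros m. unfold birkhoff_avg, birkhoff_sum.
      rewrite rsum_const. pose proof (INR_Ns_pos m). field. lra.
  - intros f Hf. destruct (ContTorus_bounded d f Hf) as [M HM].
    unfold empirical_state at 1. apply (Ulim_eq U HU).
    assert (Hdiff: Uconv U (fun m => birkhoff_avg (fun x => f (Tmap d A b x)) (Ns m) (xs m)
                                     - birkhoff_avg f (Ns m) (xs m)) 0).
    { apply (Uconv_inv_succ U HU _ (2 * M)). intros m. pose proof (INR_Ns_pos m).
      eapply Rle_trans; [apply (birkhoff_avg_Tmap_diff f M); auto; specialize (HNs m); lia|].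
      pose proof (Rle_trans _ _ _ (Rabs_pos _) (HM (xs m))).
      assert (INR (S m) <= INR (Ns m)) by (apply le_INR; auto).
      assert (0 < INR (S m)) by (apply lt_0_INR; lia).
      apply Rmult_le_compat_l; [lra|]. apply Rinv_le_contravar; lra. }
    replace (fun m => birkhoff_avg (fun x => f (Tmap d A b x)) (Ns m) (xs m))
      with (fun m => 1 * birkhoff_avg f (Ns m) (xs m)
                     + (birkhoff_avg (fun x => f (Tmap d A b x)) (Ns m) (xs m)
                        - birkhoff_avg f (Ns m) (xs m))).
    + replace (empirical_state f) with (1 * empirical_state f + 0) by ring.
      apply (Uconv_lin U HU); auto. apply empirical_state_Uconv; auto.
    + apply functional_extensionality. intros m. ring.
Qed.

End Empirical.

(* The Krylov-Bogolyubov argument: a subsequence of Birkhoff averages staying away from [0]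
   produces an invariant state not vanishing at [f]. *)
Lemma birkhoff_avg_uniform f : ContTorus d f -> (forall L, InvariantState d A b L -> L f = 0) ->
  forall del, 0 < del -> exists N0, (0 < N0)%nat /\
    forall N, (N0 <= N)%nat -> forall x, Rabs (birkhoff_avg f N x) < del.
Proof.
  intros Hf Hkill del Hdel. apply NNPP. intros Hnot.
  assert (Hbad: forall m : nat, exists p : nat * pt,
             (S m <= fst p)%nat /\ del <= Rabs (birkhoff_avg f (fst p) (snd p))).
  { intros m. apply NNPP. intros Hm. apply Hnot. exists (S m). split; [lia|].
    intros N HN x. apply Rnot_le_lt. intros Hx. apply Hm. exists (N, x). auto. }
  destruct (choice _ Hbad) as [p Hp].
  destruct ultrafilter_nat_exists as [U HU].
  set (Ns := fun m => fst (p m)). set (xs := fun m => snd (p m)).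
  assert (HNs: forall m, (S m <= Ns m)%nat) by (intros m; apply Hp).
  pose proof (Hkill _ (empirical_state_invariant U HU Ns xs HNs)) as H0.
  pose proof (Uconv_abs_lower U HU _ _ del (empirical_state_Uconv U HU Ns xs HNs f Hf)
                (fun m => proj2 (Hp m))) as Hlow.
  rewrite H0, Rabs_R0 in Hlow. lra.
Qed.

End Birkhoff.

(** * Coboundaries *)

Definition CxLinear (pr : Cx -> R) : Prop :=
  (forall z w, pr (cadd z w) = pr z + pr w) /\ (forall r z, pr (cscale r z) = r * pr z) /\
  pr (0, 0) = 0.

Lemma CxLinear_fst : CxLinear fst.
Proof. repeat split. Qed.

Lemma CxLinear_snd : CxLinear snd.
Proof. repeat split. Qed.

Lemma tpoly_flat_map pr d (F : nat -> list term) N x : CxLinear pr ->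
  pr (tpoly d (flat_map F (seq 0 N)) x) = rsum N (fun n => pr (tpoly d (F n) x)).
Proof.
  intros [Hadd [_ H0]]. induction N as [|N IH]; [apply H0|].
  rewrite seq_S, flat_map_app. simpl flat_map. rewrite app_nil_r, tpoly_app, Hadd, IH. reflexivity.
Qed.

Section Coboundary.
Variables (d : nat) (A : nat -> nat -> Z) (b : pt).

Definition avg_terms (G : list term) (N : nat) : list term :=
  map (term_scale (/ INR N)) (flat_map (fun n => terms_Titer d A b n G) (seq 0 N)).

(* Trigonometric polynomial [u] with [u o T - u = G - avg_terms G N]. *)
Definition transfer_terms (G : list term) (N : nat) : list term :=
  map (term_scale (- / INR N))
    (flat_map (fun n => flat_map (fun m => terms_Titer d A b m G) (seq 0 n)) (seq 0 N)).

Lemma avg_terms_val pr G N x : CxLinear pr ->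
  pr (tpoly d (avg_terms G N) x) = birkhoff_avg d A b (fun y => pr (tpoly d G y)) N x.
Proof.
  intros Hpr. pose proof Hpr as [_ [Hscale _]]. unfold avg_terms, birkhoff_avg, birkhoff_sum.
  rewrite tpoly_scale, Hscale, tpoly_flat_map by auto. unfold Rdiv. rewrite Rmult_comm. f_equal.
  apply rsum_ext. intros n _. rewrite tpoly_Titer. reflexivity.
Qed.

Lemma transfer_terms_val pr G N x : CxLinear pr ->
  pr (tpoly d (transfer_terms G N) x)
  = - / INR N * rsum N (fun n => birkhoff_sum d A b (fun y => pr (tpoly d G y)) n x).
Proof.
  intros Hpr. pose proof Hpr as [_ [Hscale _]]. unfold transfer_terms, birkhoff_sum.
  rewrite tpoly_scale, Hscale, tpoly_flat_map by auto. f_equal.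
  apply rsum_ext. intros n _. rewrite tpoly_flat_map by auto.
  apply rsum_ext. intros m _. rewrite tpoly_Titer. reflexivity.
Qed.

Lemma birkhoff_transfer_coboundary h N x : (0 < N)%nat ->
  let u := fun y => - / INR N * rsum N (fun n => birkhoff_sum d A b h n y) in
  u (Tmap d A b x) - u x = h x - birkhoff_avg d A b h N x.
Proof.
  intros HN u. assert (0 < INR N) by (apply lt_0_INR; auto). unfold u, birkhoff_avg.
  rewrite <- Rmult_minus_distr_l, <- rsum_minus.
  rewrite (rsum_ext N _ (fun n => h (Titer d A b n x) - h x))
    by (intros; rewrite birkhoff_sum_Tmap; ring).
  rewrite rsum_minus, rsum_const. fold (birkhoff_sum d A b h N x). field. lra.
Qed.

Lemma tpoly_avg_terms_coboundary G N x : (0 < N)%nat ->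
  csub (tpoly d G x) (tpoly d (avg_terms G N) x)
  = csub (tpoly d (transfer_terms G N) (Tmap d A b x)) (tpoly d (transfer_terms G N) x).
Proof.
  intros HN. unfold csub.
  apply injective_projections; cbn [fst snd];
    [pose proof CxLinear_fst as Hpr | pose proof CxLinear_snd as Hpr];
    rewrite !transfer_terms_val, avg_terms_val by exact Hpr;
    symmetry; apply (birkhoff_transfer_coboundary (fun y => _ (tpoly d G y))); auto.
Qed.

Section Unipotent.
Hypothesis hA : UpperUnipotent d A.
Hypothesis hUE : UniquelyErgodic d A b.

Lemma avg_terms_small G eps :
  List.Forall (fun kc : term => zero_freq d (fst kc) = false) G -> 0 < eps ->
  exists N, (0 < N)%nat /\ forall x, cmod (tpoly d (avg_terms G N) x) < eps.
Proof.
  intros HG Heps. rewrite List.Forall_forall in HG.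
  assert (Hunif: forall l, (forall kc, In kc l -> zero_freq d (fst kc) = false) ->
            exists N0, (0 < N0)%nat /\ forall N, (N0 <= N)%nat -> forall x,
              Rabs (birkhoff_avg d A b (tpoly_re d l) N x) < eps / 2).
  { intros l Hl. apply birkhoff_avg_uniform; [apply ContTorus_tpoly_re| |lra].
    intros L HL. apply (state_tpoly_re_nonconst d A b hA hUE); auto. }
  destruct (Hunif G HG) as [N1 [HN1 H1]].
  destruct (Hunif (map term_negi G)) as [N2 [HN2 H2]].
  { intros kc Hin. apply in_map_iff in Hin. destruct Hin as [kc0 [<- Hin]]. exact (HG kc0 Hin). }
  exists (Nat.max N1 N2). split; [lia|]. intros x.
  eapply Rle_lt_trans; [apply cmod_le_abs|].
  rewrite (avg_terms_val fst), (avg_terms_val snd) by (apply CxLinear_fst || apply CxLinear_snd).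
  rewrite (functional_extensionality (fun y => snd (tpoly d G y)) _ (tpoly_im d G)).
  specialize (H1 (Nat.max N1 N2) ltac:(lia) x). specialize (H2 (Nat.max N1 N2) ltac:(lia) x).
  unfold tpoly_re in *. lra.
Qed.


Lemma freqA_nonconst k : zero_freq d k = false -> zero_freq d (freqA d A k) = false.
Proof.
  intros Hk. destruct (last_nonzero_index d k (zero_freq_false d k Hk)) as [i [Hi [Hki Habove]]].
  apply Bool.not_true_iff_false. intros H. apply Hki.
  rewrite <- (proj1 (zero_freq_iff d _) H i Hi). unfold freqA. destruct hA as [Hdiag Hlow].
  rewrite (Zsum_single d _ i Hi).
  - rewrite Hdiag by auto. lia.
  - intros j Hj Hji. destruct (Nat.lt_ge_cases i j).
    + rewrite Habove by lia. lia.
    + rewrite Hlow by lia. lia.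
Qed.

Lemma freqA_last k : (0 < d)%nat -> freqA d A k (d - 1)%nat = k (d - 1)%nat.
Proof.
  intros Hd. unfold freqA. destruct hA as [Hdiag Hlow].
  rewrite (Zsum_single d _ (d - 1)), Hdiag; try lia.
  intros i Hi Hne. rewrite Hlow by lia. lia.
Qed.

Lemma coboundary_approx (P : (nat -> Z) -> Prop) G eps :
  (forall k, P k -> zero_freq d k = false) -> (forall k, P k -> P (freqA d A k)) ->
  List.Forall (fun kc : term => P (fst kc)) G -> 0 < eps ->
  exists G', List.Forall (fun kc : term => P (fst kc)) G' /\ SmoothCoboundary d A b (tpoly d G') /\
    forall x, cmod (csub (tpoly d G x) (tpoly d G' x)) < eps.
Proof.
  intros HPnc HPA HG Heps.
  destruct (avg_terms_small G eps) as [N [HN Hsmall]]; [|auto|].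
  { apply (List.Forall_impl _ (fun kc => HPnc (fst kc))), HG. }
  assert (HPavg: List.Forall (fun kc : term => P (fst kc)) (avg_terms G N)).
  { unfold avg_terms. apply List.Forall_map, List.Forall_flat_map, List.Forall_forall. intros n _.
    induction n as [|n IH]; [exact HG|].
    unfold terms_Titer. rewrite Nat.iter_succ. apply List.Forall_map.
    apply (List.Forall_impl _ (fun kc => HPA (fst kc))), IH. }
  exists (G ++ map (term_scale (-1)) (avg_terms G N)). split; [|split].
  - apply List.Forall_app. split; auto. apply List.Forall_map. exact HPavg.
  - exists (tpoly d (transfer_terms G N)). split; [apply tpoly_smooth|]. intros x.
    rewrite <- tpoly_avg_terms_coboundary, tpoly_app, tpoly_scale by auto.
    unfold cadd, csub, cscale. apply injective_projections; simpl; ring.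
  - intros x. rewrite tpoly_app, tpoly_scale.
    replace (csub (tpoly d G x) (cadd (tpoly d G x) (cscale (-1) (tpoly d (avg_terms G N) x))))
      with (tpoly d (avg_terms G N) x); [apply Hsmall|].
    unfold cadd, csub, cscale. apply injective_projections; simpl; ring.
Qed.

End Unipotent.
End Coboundary.

(** * Density *)

Lemma cohomologous_const_dense d A b Psi eps : UpperUnipotent d A -> UniquelyErgodic d A b ->
  TrigPoly d Psi -> 0 < eps ->
  exists Psi', TrigPoly d Psi' /\ SmoothCohConst d A b Psi' /\
    forall x, cmod (csub (Psi x) (Psi' x)) < eps.
Proof.
  intros hA hUE HPsi Heps. destruct (TrigPoly_tpolyP d Psi HPsi) as [l ->].
  set (const := fun kc : term => zero_freq d (fst kc)).
  set (G := filter (fun kc => negb (const kc)) l).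
  destruct (coboundary_approx d A b hA hUE (fun k => zero_freq d k = false) G eps)
    as [G' [HG' [[u [Hu Hcob]] Hclose]]]; auto.
  { apply freqA_nonconst; auto. }
  { apply Forall_filter. intros kc Hkc. apply Bool.negb_true_iff, Hkc. }
  set (C := filter const l).
  assert (HC: forall x, tpoly d C x = tpoly d C (fun _ => 0)).
  { intros x. apply tpoly_zero_freq_const. intros kc Hkc. apply filter_In in Hkc. apply Hkc. }
  exists (tpoly d (C ++ G')). split; [apply TrigPoly_tpoly|]. split.
  - exists (tpoly d C (fun _ => 0)). split.
    + replace C with (filter const (C ++ G')) at 2; [apply tpoly_LebIntC|].
      rewrite filter_app, (filter_Forall_false const G') by exact HG'.
      rewrite app_nil_r. apply filter_Forall_true, Forall_filter. auto.
    + exists u. split; auto. intros x. rewrite <- Hcob, tpoly_app, <- (HC x).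
      unfold cadd, csub. apply injective_projections; simpl; ring.
  - intros x. specialize (Hclose x). rewrite (tpoly_filter d const l x), tpoly_app. fold C G.
    replace (csub (cadd (tpoly d C x) (tpoly d G x)) (cadd (tpoly d C x) (tpoly d G' x)))
      with (csub (tpoly d G x) (tpoly d G' x)); auto.
    unfold cadd, csub. apply injective_projections; simpl; ring.
Qed.

Lemma coboundary_dense_Q d A b Phi eps :
  (0 < d)%nat -> UpperUnipotent d A -> UniquelyErgodic d A b -> QPoly d Phi -> 0 < eps ->
  exists Phi', QPoly d Phi' /\ SmoothCoboundary d A b Phi' /\
    forall x, cmod (csub (Phi x) (Phi' x)) < eps.
Proof.
  intros Hd hA hUE [HPhi Hint] Heps. destruct (TrigPoly_tpolyP d Phi HPhi) as [l ->].
  assert (Hlast: (d - 1 < d)%nat) by lia.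
  set (indep := fun kc : term => Z.eqb (fst kc (d - 1)%nat) 0).
  set (G := filter (fun kc => negb (indep kc)) l).
  (* The [x_d]-average of [Phi] is the part of [Phi] independent of [x_d], so it vanishes. *)
  assert (Hindep: forall x, tpoly d (filter indep l) x = (0, 0)).
  { intros x. destruct (Hint x) as [[pr1 H1] [pr2 H2]].
    destruct (tpoly_RiemannInt_coord d l x (d - 1) Hlast) as [[pr1' H1'] [pr2' H2']].
    fold indep in H1', H2'. apply injective_projections; cbn [fst snd].
    - rewrite <- H1', <- H1. apply RiemannInt_P5.
    - rewrite <- H2', <- H2. apply RiemannInt_P5. }
  destruct (coboundary_approx d A b hA hUE (fun k => k (d - 1)%nat <> 0%Z) G eps)
    as [G' [HG' [Hcob Hclose]]]; auto.
  { intros k Hk. apply Bool.not_true_iff_false. intros H0.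
    apply Hk, (proj1 (zero_freq_iff d k) H0). lia. }
  { intros k Hk. rewrite freqA_last; auto. }
  { apply Forall_filter. intros kc Hkc. apply Bool.negb_true_iff, Z.eqb_neq in Hkc. exact Hkc. }
  assert (HG'indep: filter indep G' = nil).
  { apply filter_Forall_false. eapply List.Forall_impl; [|exact HG']. intros kc Hkc.
    apply Z.eqb_neq, Hkc. }
  exists (tpoly d G'). split; [split|split; [exact Hcob|]].
  - apply TrigPoly_tpoly.
  - intros x. destruct (tpoly_RiemannInt_coord d G' x (d - 1) Hlast) as [H1 H2].
    fold indep in H1, H2. rewrite HG'indep in H1, H2. exact (conj H1 H2).
  - intros x. specialize (Hclose x). rewrite (tpoly_filter d indep l x), Hindep. fold G.
    replace (cadd (0, 0) (tpoly d G x)) with (tpoly d G x); auto.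
    unfold cadd. apply injective_projections; simpl; ring.
Qed.

Theorem lemma2p3 (d : nat) (A : nat -> nat -> Z) (b : pt)
  (hd : (2 <= d)%nat) (hA : UpperUnipotent d A) (hAI : NotIdentity d A)
  (hUE : UniquelyErgodic d A b) :
  (forall Psi : pt -> Cx, TrigPoly d Psi -> forall eps : R, 0 < eps ->
     exists Psi' : pt -> Cx, TrigPoly d Psi' /\ SmoothCohConst d A b Psi' /\
       forall x : pt, cmod (csub (Psi x) (Psi' x)) < eps) /\
  (forall Phi : pt -> Cx, QPoly d Phi -> forall eps : R, 0 < eps ->
     exists Phi' : pt -> Cx, QPoly d Phi' /\ SmoothCoboundary d A b Phi' /\
       forall x : pt, cmod (csub (Phi x) (Phi' x)) < eps).
Proof.
  split; intros.
  - apply cohomologous_const_dense; auto.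
  - apply coboundary_dense_Q; auto. lia.
Qed.
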